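(* For every $A\subseteq[n]$ one has (i) $[\Gamma_A,\underline{D}]=[\Gamma_A,\underline{x}]=0$, and (ii) $[\Gamma_A,\Gamma_{[n]}]=0$, as operators on $\mathcal{P}(\mathbb{R}^n)\otimes V$.
   Context: Fix $n\ge1$ and real parameters $\mu_1,\dots,\mu_n>0$; write $[n]=\{1,\dots,n\}$. For $i\in[n]$, $r_i$ is the reflection $(r_if)(x)=f(x_1,\dots,-x_i,\dots,x_n)$ and $T_i=\partial_{x_i}+\frac{\mu_i}{x_i}(1-r_i)$. $\mathcal{C}\ell_n$ is generated by $e_1,\dots,e_n$ with $e_ie_j+e_je_i=-2\delta_{ij}$, $V$ is a fixed left $\mathcal{C}\ell_n$-module, and operators act on $\mathcal{P}(\mathbb{R}^n)\otimes V$ with $x_i,T_i,r_i$ acting on the polynomial factor and $e_i$ on $V$. For $A\subseteq[n]$: $\underline{D}_A=\sum_{i\in A}e_iT_i$, $\underline{x}_A=\sum_{i\in A}e_ix_i$, $\underline{S}_A=\frac12([\underline{x}_A,\underline{D}_A]-1)$, $\Gamma_A=\underline{S}_A\prod_{i\in A}r_i$ (empty sums $0$, empty products $1$); $\underline{D}=\underline{D}_{[n]}$, $\underline{x}=\underline{x}_{[n]}$. *)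

From HB Require Import structures.
From mathcomp Require Import all_boot all_order all_algebra.
Set Implicit Arguments. Unset Strict Implicit. Unset Printing Implicit Defensive.
Import Order.TTheory GRing.Theory Num.Theory.
Local Open Scope ring_scope.

(* Multi-indices alpha : 'I_n -> nat, standing for monomials x^alpha.
   An element of P(R^n) (x) V is represented by its coefficient map
   alpha |-> (coefficient of x^alpha) in V, with finite support. *)
Definition mindex (n : nat) := 'I_n -> nat.
Definition PV (n : nat) (V : Type) := mindex n -> V.

Definition minc n (i : 'I_n) (a : mindex n) : mindex n :=
  fun j => if j == i then (a j).+1 else a j.
Definition mdec n (i : 'I_n) (a : mindex n) : mindex n :=
  fun j => if j == i then (a j).-1 else a j.

Definition finsupp n (V : zmodType) (F : PV n V) : Prop :=
  exists N : nat, forall a : mindex n, (N < \sum_(j < n) a j)%N -> F a = 0.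

Definition zeroPV n (V : zmodType) : PV n V := fun _ => 0.

Definition clifford_rel (R : realFieldType) (V : lmodType R) n
  (e : 'I_n -> {linear V -> V}) : Prop :=
  forall (i j : 'I_n) (v : V),
    e i (e j v) + e j (e i v) = if i == j then - (v *+ 2) else 0.

Section Ops.
Variables (R : realFieldType) (V : lmodType R) (n : nat).
Variable mu : 'I_n -> R.
Variable e : 'I_n -> {linear V -> V}.

Definition opX (i : 'I_n) (F : PV n V) : PV n V :=
  fun a => if (0 < a i)%N then F (mdec i a) else 0.
Definition opR (i : 'I_n) (F : PV n V) : PV n V :=
  fun a => (-1) ^+ (a i) *: F a.
(* Dunkl operator T_i : x^b |-> (b_i + mu_i (1 - (-1)^(b_i))) x^(b - e_i) *)
Definition opT (i : 'I_n) (F : PV n V) : PV n V :=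
  fun a => (((a i).+1)%:R + mu i * (1 - (-1) ^+ (a i).+1)) *: F (minc i a).
Definition opE (i : 'I_n) (F : PV n V) : PV n V := fun a => e i (F a).

Definition opD (A : {set 'I_n}) (F : PV n V) : PV n V :=
  fun a => \sum_(i in A) opE i (opT i F) a.
Definition opXA (A : {set 'I_n}) (F : PV n V) : PV n V :=
  fun a => \sum_(i in A) opE i (opX i F) a.

Definition comm (P Q : PV n V -> PV n V) (F : PV n V) : PV n V :=
  fun a => P (Q F) a - Q (P F) a.

Definition opS (A : {set 'I_n}) (F : PV n V) : PV n V :=
  fun a => 2^-1 *: (comm (opXA A) (opD A) F a - F a).

Definition opRA (A : {set 'I_n}) (F : PV n V) : PV n V :=
  foldr (fun i G => opR i G) F (enum A).

Definition Gamma (A : {set 'I_n}) (F : PV n V) : PV n V := opS A (opRA A F).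
End Ops.

(* Put x_A = sum_(i in A) e_i x_i and D_A = sum_(i in A) e_i T_i, so that
   2 S_A = [x_A, D_A] - 1.  The Clifford relations give x_A^2 = - sum x_i^2 and
   D_A^2 = - sum T_i^2, and the Dunkl relation [T_i, x_i] = 1 + 2 mu_i r_i, with
   r_i anticommuting with x_i and T_i, gives [T_i^2, x_i] = 2 T_i and
   [T_i, x_i^2] = 2 x_i.  Hence [x_A, D_A^2] = 2 D_A and [D_A, x_A^2] = 2 x_A,
   which say exactly that S_A anticommutes with x_A and D_A.  The product of the
   r_i over A anticommutes with x_A and D_A too, so Gamma_A commutes with both;
   for k outside A, e_k x_k and e_k T_k anticommute with x_A and D_A and commute
   with every r_i, i in A, so they commute with Gamma_A.  Writing x = x_A + x_A'
   and D = D_A + D_A' gives (i), and (ii) follows because Gamma_[n] is built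
   from x, D and the r_i. *)

From HB Require Import structures.
From mathcomp Require Import all_boot all_order all_algebra.
From mathcomp Require Import boolp functions ring.
Set Implicit Arguments. Unset Strict Implicit. Unset Printing Implicit Defensive.
Import Order.TTheory GRing.Theory Num.Theory.
Local Open Scope ring_scope.

Section Anticommutation.
Variable L : pzRingType.
Implicit Types a b c : L.

Definition anticomm a b := a * b = - (b * a).

Lemma anticommC a b : anticomm a b -> anticomm b a.
Proof. by rewrite /anticomm => ->; rewrite opprK. Qed.

Lemma anticomm_sumr (I : Type) (s : seq I) (P : pred I) (F : I -> L) a :
  (forall i, P i -> anticomm a (F i)) -> anticomm a (\sum_(i <- s | P i) F i).
Proof.
by move=> aF; rewrite /anticomm mulr_sumr mulr_suml -sumrN; apply: eq_bigr.
Qed.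

Lemma commr_anticommM a b c : anticomm a b -> anticomm a c -> GRing.comm a (b * c).
Proof.
by move=> ab ac; rewrite /GRing.comm mulrA ab mulNr -mulrA ac mulrN opprK mulrA.
Qed.

Lemma commr_sqr_commutator a b :
  a ^+ 2 * b - b * a ^+ 2 = a * (a * b - b * a) + (a * b - b * a) * a.
Proof.
rewrite mulrBr mulrBl !mulrA expr2 addrA; congr (_ + _).
by rewrite -!mulrA addrNK.
Qed.

Lemma anticommE a b : anticomm a b <-> a * b + b * a = 0.
Proof. by rewrite /anticomm; split=> [->|/eqP]; rewrite ?addNr // addr_eq0 => /eqP. Qed.

Lemma commutator_sub1_anticommr a b :
  (a * b - b * a - 1) * b + b * (a * b - b * a - 1) = a * b ^+ 2 - b ^+ 2 * a - b *+ 2.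
Proof.
rewrite !mulrBl !mulrBr mul1r mulr1 !mulrA !expr2 addrACA -(addrA (a * b * b)).
by rewrite addKr -opprD -mulr2n.
Qed.

Lemma commutator_sub1_anticomml a b :
  (a * b - b * a - 1) * a + a * (a * b - b * a - 1) = a ^+ 2 * b - b * a ^+ 2 - a *+ 2.
Proof.
rewrite !mulrBl !mulrBr mul1r mulr1 !mulrA !expr2 addrACA.
by rewrite (addrC (a * b * a - _)) (addrA (a * a * b - _)) subrK -opprD -mulr2n.
Qed.

Lemma anticommMl a b c : GRing.comm c b -> anticomm a b -> anticomm (c * a) b.
Proof. by move=> cb ab; rewrite /anticomm -mulrA ab mulrN mulrA cb mulrA. Qed.

Lemma mulr_prod_sign (I : Type) (s : seq I) (P : pred I) (r : I -> L) (c : I -> nat) a :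
  (forall j, P j -> a * r j = (-1) ^+ c j * (r j * a)) ->
  a * \prod_(j <- s | P j) r j =
    (-1) ^+ (\sum_(j <- s | P j) c j) * (\prod_(j <- s | P j) r j * a).
Proof.
move=> arc; elim: s => [|j s IHs]; first by rewrite !big_nil mulr1 expr0 !mul1r.
rewrite !big_cons; case: ifP => Pj //.
rewrite mulrA arc // -!mulrA IHs [r j * _]mulrA commr_sign.
by rewrite !mulrA -exprD.
Qed.

End Anticommutation.

Section CliffordSums.
Variables (L : pzRingType) (n : nat) (E : 'I_n -> L).
Hypothesis E_clifford :
  forall i j, E i * E j + E j * E i = if i == j then - 2%:R else 0.
Hypothesis two_lreg : GRing.lreg (2%:R : L).

Definition csum (Y : 'I_n -> L) (A : {set 'I_n}) := \sum_(i in A) E i * Y i.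

Lemma csum_setT Y A : csum Y setT = csum Y A + csum Y (~: A).
Proof. by rewrite /csum (big_setID A) setTI setTD. Qed.

Lemma anticomm_E i j : i != j -> anticomm (E i) (E j).
Proof. by move=> ij; apply/eqP; rewrite -addr_eq0 E_clifford (negbTE ij). Qed.

Lemma anticomm_csum_term (Z Y : 'I_n -> L) k i : k != i ->
  GRing.comm (E i) (Z k) -> GRing.comm (E k) (Y i) -> GRing.comm (Z k) (Y i) ->
  anticomm (E k * Z k) (E i * Y i).
Proof.
move=> ki EZ EY ZY; rewrite /anticomm -mulrA (mulrA (Z k)) -EZ -mulrA ZY.
by rewrite !mulrA (anticomm_E ki) mulNr -!mulrA mulNr EY -!mulrA.
Qed.

Lemma anticomm_csum (Z Y : 'I_n -> L) k (A : {set 'I_n}) : k \notin A ->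
  (forall i, GRing.comm (E i) (Z k)) -> (forall i, GRing.comm (E k) (Y i)) ->
  (forall i, i \in A -> GRing.comm (Z k) (Y i)) ->
  anticomm (E k * Z k) (csum Y A).
Proof.
move=> kA EZ EY ZY; apply: anticomm_sumr => i iA.
by apply: anticomm_csum_term (ZY i iA) => //; apply: contraNneq kA => ->.
Qed.

Lemma csum_sqr Y A : (forall i j, GRing.comm (E i) (Y j)) ->
  (forall i j, GRing.comm (Y i) (Y j)) ->
  csum Y A ^+ 2 = - \sum_(i in A) Y i ^+ 2.
Proof.
move=> EY YY; apply: two_lreg; rewrite !mulr_natl.
have -> : csum Y A ^+ 2 = \sum_(i in A) \sum_(j in A) E i * E j * (Y i * Y j).
  rewrite expr2 mulr_suml; apply: eq_bigr => i _; rewrite mulr_sumr.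
  by apply: eq_bigr => j _; rewrite -mulrA (mulrA (Y i)) -EY !mulrA.
rewrite mulr2n {1}exchange_big -big_split -sumrN -sumrMnl /=.
apply: eq_bigr => i iA; rewrite -big_split (bigD1 i) //= big1 ?addr0.
  by rewrite -mulrDl E_clifford eqxx mulNr mulr_natl mulNrn expr2.
by move=> j /andP[_ ji]; rewrite (YY j i) -mulrDl E_clifford (negbTE ji) mul0r.
Qed.

Lemma csum_commutator Y W A : (forall i j, GRing.comm (E i) (W j)) ->
  (forall i j, i != j -> GRing.comm (Y i) (W j)) ->
  csum Y A * (\sum_(i in A) W i) - (\sum_(i in A) W i) * csum Y A =
    \sum_(i in A) E i * (Y i * W i - W i * Y i).
Proof.
move=> EW YW; rewrite mulr_suml mulr_sumr -sumrB; apply: eq_bigr => i iA.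
rewrite mulr_sumr mulr_suml -sumrB (bigD1 i) //= big1 ?addr0.
  by rewrite mulrBr !mulrA EW.
by move=> j /andP[_ ji]; rewrite -mulrA YW // mulrA EW -mulrA subrr.
Qed.

End CliffordSums.

Section DunklAlgebra.
Variables (L : pzRingType) (n : nat) (E X T r Q : 'I_n -> L).
Hypotheses
  (E_clifford : forall i j, E i * E j + E j * E i = if i == j then - 2%:R else 0)
  (two_lreg : GRing.lreg (2%:R : L))
  (commEX : forall i j, GRing.comm (E i) (X j))
  (commET : forall i j, GRing.comm (E i) (T j))
  (commEr : forall i j, GRing.comm (E i) (r j))
  (commXX : forall i j, GRing.comm (X i) (X j))
  (commTT : forall i j, GRing.comm (T i) (T j))
  (commXT : forall i j, i != j -> GRing.comm (X i) (T j))
  (commrr : forall i j, GRing.comm (r i) (r j))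
  (Xr_sign : forall i j, X i * r j = (-1) ^+ (i == j) * (r j * X i))
  (Tr_sign : forall i j, T i * r j = (-1) ^+ (i == j) * (r j * T i))
  (anticommQX : forall i, anticomm (Q i) (X i))
  (anticommQT : forall i, anticomm (Q i) (T i))
  (TX_commutator : forall i, T i * X i - X i * T i = 1 + Q i *+ 2).

Implicit Types A B : {set 'I_n}.

Local Notation xA := (csum E X).
Local Notation DA := (csum E T).

Definition rA A := \prod_(i <- enum A) r i.
(* Twice the paper's [S_A] and [Gamma_A]. *)
Definition S2 A := xA A * DA A - DA A * xA A - 1.
Definition G2 A := S2 A * rA A.

Lemma sqrT_X_commutator i : T i ^+ 2 * X i - X i * T i ^+ 2 = T i *+ 2.
Proof.
rewrite commr_sqr_commutator TX_commutator mulrDr mulrDl mulr1 mul1r.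
by rewrite mulrnAr mulrnAl anticommQT mulNrn addrACA subrr addr0 mulr2n.
Qed.

Lemma T_sqrX_commutator i : T i * X i ^+ 2 - X i ^+ 2 * T i = X i *+ 2.
Proof.
apply: oppr_inj; rewrite opprB commr_sqr_commutator -opprB TX_commutator.
rewrite mulrN mulNr -opprD mulrDr mulrDl mulr1 mul1r mulrnAr mulrnAl.
by rewrite anticommQX mulNrn addrACA subrr addr0 mulr2n.
Qed.

Lemma S2_anticomm_D A : anticomm (S2 A) (DA A).
Proof.
apply/anticommE; rewrite commutator_sub1_anticommr (csum_sqr E_clifford) //.
apply/eqP; rewrite subr_eq0; apply/eqP.
rewrite mulrN mulNr -opprD (csum_commutator (Y := X)); last 2 first.
- by move=> i j; apply/commrX/commET.
- by move=> i j ij; apply/commrX/commXT.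
rewrite (eq_bigr (fun i => - (E i * T i *+ 2))); last first.
  by move=> i _; rewrite -opprB sqrT_X_commutator mulrN mulrnAr.
by rewrite sumrN opprK sumrMnl.
Qed.

Lemma S2_anticomm_x A : anticomm (S2 A) (xA A).
Proof.
apply/anticommE; rewrite commutator_sub1_anticomml (csum_sqr E_clifford) //.
apply/eqP; rewrite subr_eq0; apply/eqP.
rewrite mulNr mulrN opprK addrC (csum_commutator (Y := T)); last 2 first.
- by move=> i j; apply/commrX/commEX.
- by move=> i j ij; apply/commrX/commr_sym/commXT; rewrite eq_sym.
rewrite (eq_bigr (fun i => E i * X i *+ 2)); last first.
  by move=> i _; rewrite T_sqrX_commutator mulrnAr.
by rewrite sumrMnl.
Qed.

Lemma csum_term_rA (Y : 'I_n -> L) i B :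
  (forall i j, Y i * r j = (-1) ^+ (i == j) * (r j * Y i)) ->
  E i * Y i * rA B = (-1) ^+ (i \in B) * (rA B * (E i * Y i)).
Proof.
move=> Yr; rewrite /rA (mulr_prod_sign _ (c := fun j => nat_of_bool (i == j))).
  congr (_ ^+ _ * _); rewrite big_enum /=; case: (boolP (i \in B)) => iB.
    rewrite (bigD1 i) //= eqxx big1 // => j /andP[_ ji].
    by rewrite eq_sym (negbTE ji).
  by rewrite big1 // => j jB; case: eqP jB => // <-; rewrite (negbTE iB).
move=> j _; rewrite -mulrA Yr (mulrA (E i)) (commr_sign (E i)) -!mulrA.
by congr (_ * _); rewrite !mulrA commEr.
Qed.

Lemma anticomm_csum_rA (Y : 'I_n -> L) A B :
  (forall i j, Y i * r j = (-1) ^+ (i == j) * (r j * Y i)) ->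
  A \subset B -> anticomm (csum E Y A) (rA B).
Proof.
move=> Yr AB; apply/anticommC/anticomm_sumr => i iA; apply: anticommC.
by rewrite /anticomm (csum_term_rA _ _ Yr) (subsetP AB i iA) expr1 mulN1r.
Qed.

Lemma commr_S2 c A : anticomm c (xA A) -> anticomm c (DA A) -> GRing.comm c (S2 A).
Proof.
by move=> cx cD; apply: commrB; [apply: commrB; apply: commr_anticommM | apply: commr1].
Qed.

Lemma commr_rA_S2 A B : A \subset B -> GRing.comm (rA B) (S2 A).
Proof.
by move=> AB; apply: commr_S2; apply: anticommC; apply: anticomm_csum_rA.
Qed.

Lemma commr_csum_term_G2 (Z : 'I_n -> L) k A : k \notin A ->
  (forall i j, Z i * r j = (-1) ^+ (i == j) * (r j * Z i)) ->
  (forall i, GRing.comm (E i) (Z k)) ->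
  (forall i, i \in A -> GRing.comm (Z k) (X i)) ->
  (forall i, i \in A -> GRing.comm (Z k) (T i)) ->
  GRing.comm (E k * Z k) (G2 A).
Proof.
move=> kA Zr EZ ZX ZT; apply: commrM.
  by apply: commr_S2; apply: anticomm_csum.
by rewrite /GRing.comm (csum_term_rA _ _ Zr) (negbTE kA) expr0 mul1r.
Qed.

Lemma commr_G2_D A : GRing.comm (G2 A) (DA setT).
Proof.
rewrite (csum_setT _ _ A); apply: commrD.
  apply/commr_sym/commr_anticommM.
    exact/anticommC/S2_anticomm_D.
  exact: anticomm_csum_rA Tr_sign (subxx A).
apply: commr_sum => k; rewrite inE => kA; apply/commr_sym/commr_csum_term_G2 => //.
by move=> i iA; apply/commr_sym/commXT; apply: contraNneq kA => <-.
Qed.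

Lemma commr_G2_x A : GRing.comm (G2 A) (xA setT).
Proof.
rewrite (csum_setT _ _ A); apply: commrD.
  apply/commr_sym/commr_anticommM.
    exact/anticommC/S2_anticomm_x.
  exact: anticomm_csum_rA Xr_sign (subxx A).
apply: commr_sum => k; rewrite inE => kA; apply/commr_sym/commr_csum_term_G2 => //.
by move=> i iA; apply: commXT; apply: contraNneq kA => ->.
Qed.

Lemma commr_G2 A : GRing.comm (G2 A) (G2 setT).
Proof.
apply: commrM.
  have [Gx GD] := (commr_G2_x A, commr_G2_D A).
  by apply: commrB; [apply: commrB; apply: commrM | apply: commr1].
apply/commr_sym/commrM; first by apply: commr_rA_S2; apply: subsetT.
by apply: commr_prod => j _; apply/commr_sym/commr_prod => i _; apply: commrr.
Qed.

End DunklAlgebra.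

Section LinearEndomorphisms.
Variables (R : pzRingType) (U : lmodType R).

Record lend := LEnd { lend_fun :> U -> U; lend_linear : linear lend_fun }.

HB.instance Definition _ (P : lend) :=
  GRing.isLinear.Build R U U *:%R P (lend_linear P).
HB.instance Definition _ := gen_eqMixin lend.
HB.instance Definition _ := gen_choiceMixin lend.

Lemma lend_ext (P Q : lend) : P =1 Q -> P = Q.
Proof.
case: P Q => f f_lin [g g_lin] /funext /= fg; case: _ / fg in g_lin *.
by rewrite (Prop_irrelevance f_lin g_lin).
Qed.

Lemma zero_linear : linear (fun _ : U => 0 : U).
Proof. by move=> a u v; rewrite scaler0 addr0. Qed.
Lemma add_linear (P Q : lend) : linear (fun u => P u + Q u).
Proof. by move=> a u v; rewrite !linearP scalerDr addrACA. Qed.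
Lemma opp_linear (P : lend) : linear (fun u => - P u).
Proof. by move=> a u v; rewrite linearP opprD scalerN. Qed.
Lemma id_linear : linear (fun u : U => u).
Proof. by []. Qed.
Lemma comp_linear (P Q : lend) : linear (fun u => P (Q u)).
Proof. by move=> a u v; rewrite !linearP. Qed.

Definition lend0 := LEnd zero_linear.
Definition lend_add P Q := LEnd (add_linear P Q).
Definition lend_opp P := LEnd (opp_linear P).
Definition lend1 := LEnd id_linear.
Definition lend_mul P Q := LEnd (comp_linear P Q).

Lemma lend_addA : associative lend_add.
Proof. by move=> P Q S; apply: lend_ext => u; apply: addrA. Qed.
Lemma lend_addC : commutative lend_add.
Proof. by move=> P Q; apply: lend_ext => u; apply: addrC. Qed.
Lemma lend_add0 : left_id lend0 lend_add.
Proof. by move=> P; apply: lend_ext => u; apply: add0r. Qed.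
Lemma lend_addN : left_inverse lend0 lend_opp lend_add.
Proof. by move=> P; apply: lend_ext => u; apply: addNr. Qed.

HB.instance Definition _ :=
  GRing.isZmodule.Build lend lend_addA lend_addC lend_add0 lend_addN.

Lemma lend_mulA : associative lend_mul.
Proof. by move=> P Q S; apply: lend_ext. Qed.
Lemma lend_mul1 : left_id lend1 lend_mul.
Proof. by move=> P; apply: lend_ext. Qed.
Lemma lend_mulr1 : right_id lend1 lend_mul.
Proof. by move=> P; apply: lend_ext. Qed.
Lemma lend_mulDl : left_distributive lend_mul lend_add.
Proof. by move=> P Q S; apply: lend_ext. Qed.
Lemma lend_mulDr : right_distributive lend_mul lend_add.
Proof. by move=> P Q S; apply: lend_ext => u; apply: linearD. Qed.

HB.instance Definition _ := GRing.Zmodule_isPzRing.Build lend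
  lend_mulA lend_mul1 lend_mulr1 lend_mulDl lend_mulDr.

Lemma lend_sumE (I : Type) (s : seq I) (p : pred I) (P : I -> lend) u :
  (\sum_(i <- s | p i) P i) u = \sum_(i <- s | p i) P i u.
Proof. by elim/big_rec2: _ => // i Q v _ <-. Qed.

End LinearEndomorphisms.

Section ScalarEndomorphisms.
Variables (R : comPzRingType) (U : lmodType R).

Lemma scale_linear (c : R) : linear (fun u : U => c *: u).
Proof. by move=> a u v; rewrite scalerDr !scalerA mulrC. Qed.

Definition lscale c : lend U := LEnd (scale_linear c).

Lemma commr_lscale c (P : lend U) : GRing.comm (lscale c) P.
Proof. by apply: lend_ext => u /=; rewrite linearZ. Qed.

Lemma commr_lscaleM c (P Q : lend U) : GRing.comm P Q -> GRing.comm (lscale c * P) Q.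
Proof.
by move=> PQ; apply/commr_sym/commrM; [exact/commr_sym/commr_lscale | exact/commr_sym].
Qed.

End ScalarEndomorphisms.
Arguments lscale {R U} c.

Section MultiIndices.
Variable n : nat.
Implicit Types (i j : 'I_n) (a : mindex n).

Lemma minc_id i a : minc i a i = (a i).+1.
Proof. by rewrite /minc eqxx. Qed.
Lemma mdec_id i a : mdec i a i = (a i).-1.
Proof. by rewrite /mdec eqxx. Qed.
Lemma minc_neq i j a : i != j -> minc i a j = a j.
Proof. by rewrite /minc eq_sym => /negbTE ->. Qed.
Lemma mdec_neq i j a : i != j -> mdec i a j = a j.
Proof. by rewrite /mdec eq_sym => /negbTE ->. Qed.

Lemma mincC i j a : minc i (minc j a) = minc j (minc i a).
Proof. by apply/funext => k; rewrite /minc; case: (k == i); case: (k == j). Qed.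
Lemma mdecC i j a : mdec i (mdec j a) = mdec j (mdec i a).
Proof. by apply/funext => k; rewrite /mdec; case: (k == i); case: (k == j). Qed.
Lemma minc_mdec i j a : i != j -> minc i (mdec j a) = mdec j (minc i a).
Proof.
move=> ij; apply/funext => k; rewrite /minc /mdec.
by case: eqVneq => [->|]; rewrite ?(negbTE ij) //; case: (k == j).
Qed.
Lemma mincK i a : mdec i (minc i a) = a.
Proof. by apply/funext => k; rewrite /minc /mdec; case: eqVneq => [->|]. Qed.
Lemma mdecK i a : (0 < a i)%N -> minc i (mdec i a) = a.
Proof.
move=> ai; apply/funext => k; rewrite /minc /mdec.
by case: eqVneq => [->|] //; rewrite prednK.
Qed.

End MultiIndices.

Section DunklOperators.
Context {R : realFieldType} {V : lmodType R} {n : nat}.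
Variables (mu : 'I_n -> R) (e : 'I_n -> {linear V -> V}).
Local Notation op := (lend (PV n V)).

Lemma op_ext (P Q : op) : (forall F a, P F a = Q F a) -> P = Q.
Proof. by move=> PQ; apply: lend_ext => F; apply/funext => a; apply: PQ. Qed.

Lemma opX_linear i : linear (@opX R V n i).
Proof.
move=> c F G; apply/funext => a; rewrite /opX !fctE.
by case: ifP; rewrite ?scaler0 ?addr0.
Qed.
Lemma opR_linear i : linear (@opR R V n i).
Proof.
by move=> c F G; apply/funext => a; rewrite /opR !fctE scalerDr !scalerA mulrC.
Qed.
Lemma opT_linear i : linear (@opT R V n mu i).
Proof.
by move=> c F G; apply/funext => a; rewrite /opT !fctE scalerDr !scalerA mulrC.
Qed.
Lemma opE_linear i : linear (opE e i).
Proof. by move=> c F G; apply/funext => a; rewrite /opE !fctE linearP. Qed.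

Definition Xop i : op := LEnd (opX_linear i).
Definition Rop i : op := LEnd (opR_linear i).
Definition Top i : op := LEnd (opT_linear i).
Definition Eop i : op := LEnd (opE_linear i).
Definition Qop i : op := lscale (mu i) * Rop i.

Lemma commEX i j : GRing.comm (Eop i) (Xop j).
Proof.
by apply: op_ext => F a /=; rewrite /opE /opX; case: ifP; rewrite ?linear0.
Qed.
Lemma commET i j : GRing.comm (Eop i) (Top j).
Proof. by apply: op_ext => F a /=; rewrite /opE /opT linearZ. Qed.
Lemma commER i j : GRing.comm (Eop i) (Rop j).
Proof. by apply: op_ext => F a /=; rewrite /opE /opR linearZ. Qed.
Lemma commRR i j : GRing.comm (Rop i) (Rop j).
Proof. by apply: op_ext => F a /=; rewrite /opR !scalerA mulrC. Qed.

Lemma commXX i j : GRing.comm (Xop i) (Xop j).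
Proof.
apply: op_ext => F a /=; rewrite /opX; have [->//|ij] := eqVneq i j.
by rewrite mdec_neq // mdec_neq 1?eq_sym // mdecC; case: ifP; case: ifP.
Qed.
Lemma commTT i j : GRing.comm (Top i) (Top j).
Proof.
apply: op_ext => F a /=; rewrite /opT; have [->//|ij] := eqVneq i j.
by rewrite minc_neq // minc_neq 1?eq_sym // mincC !scalerA mulrC.
Qed.
Lemma commXT i j : i != j -> GRing.comm (Xop i) (Top j).
Proof.
move=> ij; apply: op_ext => F a /=; rewrite /opX /opT mdec_neq // minc_neq 1?eq_sym //.
by case: ifP; rewrite ?scaler0 // minc_mdec 1?eq_sym.
Qed.

Lemma XR_sign i j : Xop i * Rop j = (-1) ^+ (i == j) * (Rop j * Xop i).
Proof.
have [<-|ij] := eqVneq i j; rewrite ?expr1 ?expr0 ?mulN1r ?mul1r; apply: op_ext => F a /=.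
  rewrite /opX /opR !fctE; case: ifP => ai; rewrite ?scaler0 ?oppr0 // mdec_id.
  by rewrite -scaleNr -{2}(prednK ai) exprS mulN1r opprK.
by rewrite /opX /opR; case: ifP; rewrite ?scaler0 // mdec_neq.
Qed.
Lemma TR_sign i j : Top i * Rop j = (-1) ^+ (i == j) * (Rop j * Top i).
Proof.
have [<-|ij] := eqVneq i j; rewrite ?expr1 ?expr0 ?mulN1r ?mul1r; apply: op_ext => F a /=.
  by rewrite /opT /opR !fctE minc_id exprS !scalerA mulN1r mulrN scaleNr mulrC.
by rewrite /opT /opR minc_neq // !scalerA mulrC.
Qed.

Lemma anticommQX i : anticomm (Qop i) (Xop i).
Proof.
apply/anticommMl/anticommC; first exact: commr_lscale.
by rewrite /anticomm XR_sign eqxx expr1 mulN1r.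
Qed.
Lemma anticommQT i : anticomm (Qop i) (Top i).
Proof.
apply/anticommMl/anticommC; first exact: commr_lscale.
by rewrite /anticomm TR_sign eqxx expr1 mulN1r.
Qed.

Lemma TX_commutator i : Top i * Xop i - Xop i * Top i = 1 + Qop i *+ 2.
Proof.
rewrite mulr2n; apply: op_ext => F a /=; rewrite /opT /opX /opR !fctE /=.
rewrite minc_id mincK /=; case Eai: (a i) => [|k] /=.
  rewrite subr0 -[F a in RHS]scale1r !scalerA -!scalerDl.
  by congr (_ *: _); rewrite expr1 expr0; ring.
rewrite mdec_id mdecK ?Eai // -[F a in RHS]scale1r !scalerA -scalerBl -!scalerDl.
by congr (_ *: _); rewrite !exprS; ring.
Qed.

Lemma two_lreg : GRing.lreg (2%:R : op).
Proof.
move=> P Q PQ; apply: op_ext => F a; move: (congr1 (fun S : op => S F a) PQ).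
rewrite mulr2n /= !fctE -!mulr2n -!scaler_nat; apply: scalerI.
by rewrite pnatr_eq0.
Qed.

Lemma opXA_csum A : opXA e A = csum Eop Xop A.
Proof. by apply/funext => F; rewrite /opXA /csum lend_sumE fct_sumE. Qed.

Lemma opD_csum A : opD mu e A = csum Eop Top A.
Proof. by apply/funext => F; rewrite /opD /csum lend_sumE fct_sumE. Qed.

Lemma opRA_rA A : @opRA R V n A = rA Rop A.
Proof.
apply/funext => F; rewrite /opRA /rA.
by elim: (enum A) => [|i s IHs]; rewrite ?big_nil ?big_cons //= IHs.
Qed.

Lemma Gamma_G2 A : Gamma mu e A = lscale 2^-1 * G2 Eop Xop Top Rop A.
Proof. by apply/funext => F; rewrite /Gamma /opS /comm opRA_rA opXA_csum opD_csum. Qed.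

Lemma comm_lend (P Q : op) F : GRing.comm P Q -> comm P Q F = @zeroPV n V.
Proof.
move=> PQ; apply/funext => a; rewrite /comm /zeroPV.
by rewrite (_ : P (Q F) = (P * Q) F) // PQ subrr.
Qed.

Hypothesis e_clifford : clifford_rel e.

Lemma E_clifford i j :
  Eop i * Eop j + Eop j * Eop i = if i == j then - 2%:R else 0.
Proof.
apply: op_ext => F a; have := e_clifford i j (F a).
by case: eqVneq => [<-|_]; rewrite ?mulr2n /= !fctE.
Qed.

Lemma Gamma_commutators A F :
  [/\ comm (Gamma mu e A) (opD mu e setT) F = @zeroPV n V,
      comm (Gamma mu e A) (opXA e setT) F = @zeroPV n V &
      comm (Gamma mu e A) (Gamma mu e setT) F = @zeroPV n V].
Proof.
rewrite !Gamma_G2 opD_csum opXA_csum; split; apply/comm_lend/commr_lscaleM.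
- exact: (commr_G2_D E_clifford two_lreg commEX commET commER commTT commXT
    TR_sign anticommQT TX_commutator).
- exact: (commr_G2_x E_clifford two_lreg commEX commET commER commXX commXT
    XR_sign anticommQX TX_commutator).
- apply/commr_sym/commr_lscaleM/commr_sym.
  exact: (commr_G2 E_clifford two_lreg commEX commET commER commXX commTT commXT
    commRR XR_sign TR_sign anticommQX anticommQT TX_commutator).
Qed.

End DunklOperators.

Theorem lemma1 (R : realFieldType) (V : lmodType R) (n : nat)
  (mu : 'I_n -> R) (e : 'I_n -> {linear V -> V}) :
  (0 < n)%N -> (forall i, 0 < mu i) -> clifford_rel e ->
  forall (A : {set 'I_n}) (F : PV n V), finsupp F ->
    [/\ comm (Gamma mu e A) (opD mu e setT) F = @zeroPV n V,
        comm (Gamma mu e A) (opXA e setT) F = @zeroPV n V &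
        comm (Gamma mu e A) (Gamma mu e setT) F = @zeroPV n V].
Proof.
by move=> _ _ e_cl A F _; apply: Gamma_commutators.
Qed.
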